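(* Let $T:\mathbb{Z}_{\ge 0}\to\mathbb{R}$ satisfy $T(mn) = T(m)T(n) + T(m-1)T(n-1)$ for all integers $m,n\ge 1$, and suppose $T(0)=0$ and $T(1)=1$. Then $T(2)\in\{0,1,3\}$. *)

From Stdlib Require Import Reals.

(** Writing [a = T 2] and [b = T 3], the recurrence determines [T 4], ..., [T 9]
    as polynomials in [a] and [b] (using that 12 and 16 have two
    factorizations), and the two factorizations each of 18 and 30 then give
    two relations that are linear in [b].  Eliminating [b] leaves
    [a (a - 1)^2 (a - 3) (a^2 + a + 1) = 0], whose only real roots are 0, 1, 3.
    The value [T 0] plays no role. *)

From Stdlib Require Import Reals Lra Lia.
Open Scope R_scope.

Lemma real_roots_T2_polynomial (x : R) :
  x * (x - 1) ^ 2 * (x - 3) * (x ^ 2 + x + 1) = 0 -> x = 0 \/ x = 1 \/ x = 3.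
Proof.
  intros Hx.
  assert (Hquad : x ^ 2 + x + 1 <> 0) by nra.
  apply Rmult_integral in Hx as [Hx | Hx]; [| contradiction].
  apply Rmult_integral in Hx as [Hx | Hx]; [| right; right; lra].
  apply Rmult_integral in Hx as [Hx | Hx]; [left; exact Hx |].
  right; left. nra.
Qed.

Section MultiplicativeRecurrence.

Variable T : nat -> R.

Hypothesis T_mul : forall m n : nat, (1 <= m)%nat -> (1 <= n)%nat ->
  T (m * n)%nat = T m * T n + T (m - 1)%nat * T (n - 1)%nat.

Hypothesis T_one : T 1%nat = 1.

Lemma T_mul_succ (k m n : nat) : k = (S m * S n)%nat ->
  T k = T (S m) * T (S n) + T m * T n.
Proof.
  intros ->. rewrite T_mul by lia. simpl (S m - 1)%nat. simpl (S n - 1)%nat.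
  now rewrite !Nat.sub_0_r.
Qed.

Lemma T_factorizations (k m n p q : nat) :
  k = (S m * S n)%nat -> k = (S p * S q)%nat ->
  T (S m) * T (S n) + T m * T n = T (S p) * T (S q) + T p * T q.
Proof. intros Hmn Hpq. now rewrite <- (T_mul_succ k m n), <- (T_mul_succ k p q). Qed.

Let a := T 2%nat.
Let b := T 3%nat.

Lemma T4_eq : T 4%nat = a ^ 2 + 1.
Proof. rewrite (T_mul_succ 4 1 1 eq_refl), T_one. unfold a. ring. Qed.

Lemma T6_eq : T 6%nat = a * b + a.
Proof. rewrite (T_mul_succ 6 1 2 eq_refl), T_one. unfold a, b. ring. Qed.

Lemma T8_eq : T 8%nat = a ^ 3 + a + b.
Proof. rewrite (T_mul_succ 8 1 3 eq_refl), T4_eq, T_one. unfold a, b. ring. Qed.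

Lemma T9_eq : T 9%nat = a ^ 2 + b ^ 2.
Proof. rewrite (T_mul_succ 9 2 2 eq_refl). unfold a, b. ring. Qed.

Lemma T5_eq : T 5%nat = b + a * b - a ^ 2.
Proof.
  pose proof (T_factorizations 12 1 5 2 3 eq_refl eq_refl) as H12.
  rewrite T_one, T6_eq, T4_eq in H12. fold a b in H12. lra.
Qed.

Lemma T7_eq : T 7%nat = a ^ 2 + b ^ 2 - a * b + 1.
Proof.
  pose proof (T_factorizations 16 1 7 3 3 eq_refl eq_refl) as H16.
  rewrite T_one, T8_eq, T4_eq in H16. fold a b in H16. lra.
Qed.

Lemma relation_from_18 : b * (1 - 2 * a - a ^ 2) + 3 * a ^ 3 + a = 0.
Proof.
  pose proof (T_factorizations 18 1 8 2 5 eq_refl eq_refl) as H18.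
  rewrite T_one, T9_eq, T8_eq, T6_eq, T5_eq in H18. fold a b in H18. lra.
Qed.

Lemma relation_from_30 : b * (a - 2 * a ^ 2 - 1) + a ^ 4 + a ^ 2 + 2 * a = 0.
Proof.
  pose proof (T_factorizations 30 1 14 2 9 eq_refl eq_refl) as H30.
  rewrite (T_mul_succ 15 2 4), (T_mul_succ 14 1 6), (T_mul_succ 10 1 4) in H30
    by reflexivity.
  rewrite T_one, T7_eq, T6_eq, T5_eq, T4_eq, T9_eq in H30. fold a b in H30. lra.
Qed.

Lemma T2_polynomial : a * (a - 1) ^ 2 * (a - 3) * (a ^ 2 + a + 1) = 0.
Proof.
  replace (a * (a - 1) ^ 2 * (a - 3) * (a ^ 2 + a + 1)) with
    ((b * (1 - 2 * a - a ^ 2) + 3 * a ^ 3 + a) * (a - 2 * a ^ 2 - 1)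
     - (b * (a - 2 * a ^ 2 - 1) + a ^ 4 + a ^ 2 + 2 * a) * (1 - 2 * a - a ^ 2))
    by ring.
  rewrite relation_from_18, relation_from_30. ring.
Qed.

End MultiplicativeRecurrence.

Theorem lemma11 (T : nat -> R)
  (hfun : forall m n : nat, (1 <= m)%nat -> (1 <= n)%nat ->
     T (m * n)%nat = T m * T n + T (m - 1)%nat * T (n - 1)%nat)
  (h0 : T 0%nat = 0) (h1 : T 1%nat = 1) :
  T 2%nat = 0 \/ T 2%nat = 1 \/ T 2%nat = 3.
Proof.
  apply real_roots_T2_polynomial, (T2_polynomial T hfun h1).
Qed.
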